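(* Let $Q$ be a Jordan loop and $x\in Q$. Then (i) $x^2x^{-1}=x$; (ii) $x^4x^{-1}=x^3$; (iii) if $x^3x^8=x^{11}$, then $x^8x^{-1}=x^7$.
   Context: A loop is a set $Q$ with a binary operation (juxtaposition) and neutral element $e$ such that for all $a,b$ the equations $ax=b$, $ya=b$ have unique solutions. A Jordan loop is a commutative loop satisfying $x^2(yx)=(x^2y)x$. For $k\ge 0$, $x^k$ denotes the right-associated product $x(x(\cdots(xe)\cdots))$ with $k$ factors $x$. Since the loop is commutative, each $x$ has a unique inverse $x^{-1}$ with $xx^{-1}=x^{-1}x=e$. *)

From Stdlib Require Import Arith.

Record Loop := {
  carrier :> Type;
  lmul : carrier -> carrier -> carrier;
  lunit : carrier;
  lunit_l : forall x, lmul lunit x = x;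
  lunit_r : forall x, lmul x lunit = x;
  ldiv_uniq : forall a b, exists! x, lmul a x = b;
  rdiv_uniq : forall a b, exists! y, lmul y a = b
}.

Definition is_jordan_loop (Q : Loop) : Prop :=
  (forall x y : Q, lmul Q x y = lmul Q y x) /\
  (forall x y : Q,
     lmul Q (lmul Q x x) (lmul Q y x) = lmul Q (lmul Q (lmul Q x x) y) x).

Fixpoint lpow (Q : Loop) (x : Q) (k : nat) : Q :=
  match k with
  | O => lunit Q
  | S k' => lmul Q x (lpow Q x k')
  end.

Definition is_inverse (Q : Loop) (x y : Q) : Prop :=
  lmul Q x y = lunit Q /\ lmul Q y x = lunit Q.


(* Every part is one instance of Jordan's identity z^2 (y z) = (z^2 y) z
   with y = x^-1, followed by cancelling z on the right: z = x gives (i);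
   z = x^2, using (i) in the form x^-1 x^2 = x, gives (ii); z = x^4, using
   (ii) in the form x^-1 x^4 = x^3, gives (iii).  The powers that occur are
   reassociated with the partial power-associativity x^2 x^k = x^(k+2) and
   x^4 x^k = x^(k+4), while the hypothesis of (iii) supplies x^3 x^8 = x^11. *)

Section JordanLoop.

Variable Q : Loop.
Hypothesis HJ : is_jordan_loop Q.

Local Infix "·" := (lmul Q) (at level 40, left associativity).

Lemma lmul_cancel_r (a b c : Q) : a · c = b · c -> a = b.
Proof.
  intro Hab.
  destruct (rdiv_uniq Q c (a · c)) as [y [_ Hy]].
  rewrite <- (Hy a eq_refl). apply Hy. symmetry. exact Hab.
Qed.

Lemma lmulC (a b : Q) : a · b = b · a.
Proof. exact (proj1 HJ a b). Qed.

Lemma jordan (z y : Q) : (z · z) · (y · z) = ((z · z) · y) · z.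
Proof. exact (proj2 HJ z y). Qed.

Lemma jordan_cancel (z y w : Q) : (z · z) · (y · z) = w · z -> (z · z) · y = w.
Proof.
  intro H. apply (lmul_cancel_r _ _ z). rewrite <- jordan. exact H.
Qed.

Lemma lpow2 (x : Q) : lpow Q x 2 = x · x.
Proof. simpl. rewrite lunit_r. reflexivity. Qed.

Lemma lpow2_mul (x : Q) (k : nat) : (x · x) · lpow Q x k = lpow Q x (2 + k).
Proof.
  induction k as [|k IHk].
  - simpl. rewrite !lunit_r. reflexivity.
  - change (lpow Q x (S k)) with (x · lpow Q x k).
    rewrite (lmulC x (lpow Q x k)), jordan, IHk, lmulC. reflexivity.
Qed.

Lemma lpow4 (x : Q) : lpow Q x 4 = (x · x) · (x · x).
Proof. rewrite <- (lpow2 x) at 2. rewrite lpow2_mul. reflexivity. Qed.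

Lemma lpow4_mul (x : Q) (k : nat) : lpow Q x 4 · lpow Q x k = lpow Q x (4 + k).
Proof.
  enough (Hpair : lpow Q x 4 · lpow Q x k = lpow Q x (4 + k)
               /\ lpow Q x 4 · lpow Q x (S k) = lpow Q x (5 + k))
    by apply Hpair.
  induction k as [|k [IHk IHk1]].
  - split; simpl lpow at 2; rewrite lunit_r; [reflexivity | apply lmulC].
  - split; [exact IHk1 |].
    (* Jordan's identity with z = x^2 advances the exponent by two. *)
    pose proof (jordan (x · x) (lpow Q x k)) as J.
    rewrite <- lpow4, (lmulC (lpow Q x k)), lpow2_mul, IHk in J.
    simpl plus in J. rewrite J, lmulC, lpow2_mul. reflexivity.
Qed.

Variables x xi : Q.
Hypothesis Hxi : is_inverse Q x xi.

Lemma lpow2_mul_inv : lpow Q x 2 · xi = x.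
Proof.
  rewrite lpow2. apply jordan_cancel.
  rewrite (proj2 Hxi), lunit_r. reflexivity.
Qed.

Lemma lpow4_mul_inv : lpow Q x 4 · xi = lpow Q x 3.
Proof.
  rewrite lpow4. apply jordan_cancel.
  rewrite <- lpow4, <- lpow2, (lmulC xi), lpow2_mul_inv.
  rewrite (lmulC (lpow Q x 3)), lpow2, lpow2_mul.
  apply lmulC.
Qed.

Lemma lpow8_mul_inv :
  lpow Q x 3 · lpow Q x 8 = lpow Q x 11 -> lpow Q x 8 · xi = lpow Q x 7.
Proof.
  intro H311.
  assert (Hx8 : lpow Q x 8 = lpow Q x 4 · lpow Q x 4) by exact (eq_sym (lpow4_mul x 4)).
  rewrite Hx8. apply jordan_cancel.
  rewrite (lmulC xi), lpow4_mul_inv, <- Hx8, lmulC, H311.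
  rewrite (lmulC (lpow Q x 7)), lpow4_mul. reflexivity.
Qed.

End JordanLoop.

Theorem lemma2p5 (Q : Loop) (HJ : is_jordan_loop Q) (x xi : Q)
  (Hxi : is_inverse Q x xi) :
  lmul Q (lpow Q x 2) xi = x /\
  lmul Q (lpow Q x 4) xi = lpow Q x 3 /\
  (lmul Q (lpow Q x 3) (lpow Q x 8) = lpow Q x 11 ->
   lmul Q (lpow Q x 8) xi = lpow Q x 7).
Proof.
  split; [| split].
  - exact (lpow2_mul_inv Q HJ x xi Hxi).
  - exact (lpow4_mul_inv Q HJ x xi Hxi).
  - exact (lpow8_mul_inv Q HJ x xi Hxi).
Qed.
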